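(* Let $R\subseteq\mathbb{C}$ be a subset such that $M:=\inf\{|x|: x\in R\setminus\{0\}\}>0$. Let $\mathcal{F}=(c_{i,j})$ be a frieze pattern over $R\setminus\{0\}$ of height $n\in\mathbb{N}$. Then every entry $c_{i,i+2}$ ($i\in\mathbb{Z}$) of its quiddity cycle satisfies $$|c_{i,i+2}|\le\frac{(n-1)+2M}{M^2}.$$
   Context: A frieze pattern of height $n$ over $S\subseteq\mathbb{C}$ is a family $(c_{i,j})_{i\in\mathbb{Z},\ i\le j\le i+n+3}$ of complex numbers such that: - $c_{i,i}=c_{i,i+n+3}=0$ and $c_{i,i+1}=c_{i,i+n+2}=1$; - $c_{i,j}\in S$ for $i+2\le j\le i+n+1$; - every adjacent $2\times2$ determinant $c_{i,j}c_{i+1,j+1}-c_{i,j+1}c_{i+1,j}$ (all entries defined) equals $1$. ''Over $R\setminus\{0\}$'' means all entries $c_{i,j}$ with $i+2\le j\le i+n+1$ are nonzero elements of $R$. The quiddity cycle of the pattern consists of the entries $c_{i,i+2}$ of its first nontrivial diagonal. *)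

(* Complex numbers are modelled by an arbitrary
   numClosedFieldType C. *)
From HB Require Import structures.
From mathcomp Require Import all_boot all_order all_algebra.
Set Implicit Arguments. Unset Strict Implicit. Unset Printing Implicit Defensive.
Import Order.TTheory GRing.Theory Num.Theory.
Local Open Scope ring_scope.

(* A frieze pattern of height n over S: the family c i j is only
   meaningful for i <= j <= i + n + 3; values outside are unconstrained. *)
Definition frieze_pattern (C : numClosedFieldType) (S : C -> Prop) (n : nat)
    (c : int -> int -> C) : Prop :=
  (forall i : int,
     c i i = 0 /\ c i (i + n%:Z + 3) = 0 /\
     c i (i + 1) = 1 /\ c i (i + n%:Z + 2) = 1) /\
  (forall i j : int, i + 2 <= j -> j <= i + n%:Z + 1 -> S (c i j)) /\
  (forall i j : int, i + 1 <= j -> j + 1 <= i + n%:Z + 3 ->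
     c i j * c (i + 1) (j + 1) - c i (j + 1) * c (i + 1) j = 1).

Definition nonzero_in (C : numClosedFieldType) (R : {pred C}) : C -> Prop :=
  fun x => x \in R /\ x != 0.

Definition is_inf_abs (C : numClosedFieldType) (R : {pred C}) (M : C) : Prop :=
  (forall x, x \in R -> x != 0 -> M <= `|x|) /\
  (forall M', (forall x, x \in R -> x != 0 -> M' <= `|x|) -> M' <= M).

(* Put e k := c_{i,i+2+k} and d k := c_{i+1,i+2+k}.  The unimodular rule
   e k d (k+1) - e (k+1) d k = 1 makes e k / d k telescope, and since
   d 0 = d (n+1) = 1 and e (n+1) = 0 this gives
   c_{i,i+2} = sum_{k=0}^{n} 1 / (d k d (k+1)).
   The two extreme terms have modulus at most 1/M, the n-1 others at most
   1/M^2. *)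
From HB Require Import structures.
From mathcomp Require Import all_boot all_order all_algebra.
From mathcomp Require Import ring zify.

Set Implicit Arguments.
Unset Strict Implicit.
Unset Printing Implicit Defensive.
Import Order.TTheory GRing.Theory Num.Theory.
Local Open Scope ring_scope.

Lemma ratio_telescope (F : fieldType) (d e : nat -> F) (m : nat) :
    (forall k, (k <= m)%N -> d k != 0) ->
    (forall k, (k < m)%N -> e k * d k.+1 - e k.+1 * d k = 1) ->
  e 0%N / d 0%N = e m / d m + \sum_(k < m) (d k * d k.+1)^-1.
Proof.
elim: m => [|m IH] d_neq0 e_d_unimod; first by rewrite big_ord0 addr0.
rewrite big_ord_recr /= IH => [|k /leqW /d_neq0 //|k /ltnW /e_d_unimod //].
have dm_neq0 := d_neq0 m (leqnSn m); have dSm_neq0 := d_neq0 m.+1 (leqnn _).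
suff -> : e m / d m = e m.+1 / d m.+1 + (d m * d m.+1)^-1 by rewrite addrAC addrA.
rewrite -[(d m * _)^-1]mul1r -(e_d_unimod m (ltnSn m)).
by field; rewrite dm_neq0 dSm_neq0.
Qed.

Lemma normf_invM_le (F : numFieldType) (a b p q : F) :
  0 < p -> 0 < q -> p <= `|a| -> q <= `|b| -> `|(a * b)^-1| <= (p * q)^-1.
Proof.
move=> p_gt0 q_gt0 pa qb.
have a_gt0 : 0 < `|a| by apply: lt_le_trans pa.
have b_gt0 : 0 < `|b| by apply: lt_le_trans qb.
rewrite normfV normrM lef_pV2 ?posrE ?mulr_gt0 //.
by apply: ler_pM => //; apply: ltW.
Qed.

Lemma norm_sum_invM_adjacent_le (F : numFieldType) (M : F) (n : nat)
    (d : nat -> F) :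
    0 < M -> (0 < n)%N -> d 0%N = 1 -> d n.+1 = 1 ->
    (forall k, (0 < k <= n)%N -> M <= `|d k|) ->
  `|\sum_(k < n.+1) (d k * d k.+1)^-1| <= (n%:R - 1 + 2 * M) / M ^+ 2.
Proof.
case: n => [//|n] M_gt0 _ d0 dSn M_le_d.
have bound_split : (n.+1%:R - 1 + 2 * M) / M ^+ 2 =
    (1 * M)^-1 + \sum_(k < n) (M * M)^-1 + (M * 1)^-1.
  rewrite sumr_const card_ord -mulr_natr -addn1 natrD.
  by field; rewrite gt_eqF.
rewrite bound_split; apply: le_trans (ler_norm_sum _ _ _) _.
rewrite big_ord_recr big_ord_recl /=.
apply: lerD; first apply: lerD.
- by apply: normf_invM_le; rewrite ?d0 ?normr1 ?M_le_d.
- apply: ler_sum => k _; rewrite /bump /= add1n.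
  by apply: normf_invM_le => //; apply: M_le_d; have := ltn_ord k; lia.
- apply: normf_invM_le; rewrite ?dSn ?normr1 //.
  by apply: M_le_d; rewrite leqnn.
Qed.

Section FriezeDiagonals.

Variables (C : numClosedFieldType) (S : C -> Prop) (n : nat) (c : int -> int -> C).
Hypothesis frieze : frieze_pattern S n c.

Lemma frieze_next_diag_first (i : int) : c (i + 1) (i + 2) = 1.
Proof.
by rewrite (_ : i + 2 = i + 1 + 1) ?(frieze.1 (i + 1)).2.2.1 //; lia.
Qed.

Lemma frieze_next_diag_last (i : int) : c (i + 1) (i + 2 + n.+1%:Z) = 1.
Proof.
rewrite (_ : i + 2 + n.+1%:Z = i + 1 + n%:Z + 2); last by lia.
by rewrite (frieze.1 (i + 1)).2.2.2.
Qed.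

Lemma frieze_diag_last (i : int) : c i (i + 2 + n.+1%:Z) = 0.
Proof.
rewrite (_ : i + 2 + n.+1%:Z = i + n%:Z + 3); last by lia.
by rewrite (frieze.1 i).2.1.
Qed.

Lemma frieze_next_diag_in (i : int) (k : nat) :
  (0 < k <= n)%N -> S (c (i + 1) (i + 2 + k%:Z)).
Proof. by move=> kn; apply: frieze.2.1; lia. Qed.

Lemma frieze_diag_unimodular (i : int) (k : nat) : (k < n.+1)%N ->
  c i (i + 2 + k%:Z) * c (i + 1) (i + 2 + k.+1%:Z)
    - c i (i + 2 + k.+1%:Z) * c (i + 1) (i + 2 + k%:Z) = 1.
Proof.
move=> kn; rewrite (_ : i + 2 + k.+1%:Z = i + 2 + k%:Z + 1); last by lia.
by apply: frieze.2.2; lia.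
Qed.

Lemma frieze_quiddity_sum (S_neq0 : forall x, S x -> x != 0) (i : int) :
  c i (i + 2) =
    \sum_(k < n.+1) (c (i + 1) (i + 2 + k%:Z) * c (i + 1) (i + 2 + k.+1%:Z))^-1.
Proof.
pose d k := c (i + 1) (i + 2 + k%:Z); pose e k := c i (i + 2 + k%:Z).
have d0 : d 0%N = 1 by rewrite /d addr0 frieze_next_diag_first.
have d_neq0 k : (k <= n.+1)%N -> d k != 0.
  case: k => [|k] kn; first by rewrite d0 oner_neq0.
  have [->|kn'] := eqVneq k n; first by rewrite /d frieze_next_diag_last oner_neq0.
  by apply/S_neq0/frieze_next_diag_in; lia.
have := ratio_telescope d_neq0 (frieze_diag_unimodular i).
by rewrite /e frieze_diag_last mul0r add0r d0 divr1 addr0.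
Qed.

End FriezeDiagonals.

Theorem theorem3p6 (C : numClosedFieldType) (R : {pred C}) (M : C)
    (hinf : is_inf_abs R M) (hM : 0 < M)
    (n : nat) (hn : (0 < n)%N) (c : int -> int -> C)
    (hF : frieze_pattern (nonzero_in R) n c) :
  forall i : int, `|c i (i + 2)| <= (n%:R - 1 + 2 * M) / M ^+ 2.
Proof.
have nonzero_neq0 x : nonzero_in R x -> x != 0 by case.
move=> i; rewrite (frieze_quiddity_sum hF nonzero_neq0 i).
apply: (norm_sum_invM_adjacent_le (d := fun k => c (i + 1) (i + 2 + k%:Z)))
  => // [||k kn] /=.
- by rewrite addr0 (frieze_next_diag_first hF).
- exact: frieze_next_diag_last hF i.
- by have [x_in_R x_neq0] := frieze_next_diag_in hF i kn; apply: hinf.1.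
Qed.
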